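(* In the setting below, suppose the persistent excitation assumption and the inexact disturbance bound assumption hold, and let $\Theta_t$ be the fixed-complexity parameter set with periodic update. Then for every $\epsilon>0$, every $\theta\in\Theta_0$ such that $[M_\Theta]_i(\theta-\theta^\ast)\ge\epsilon+\rho N_u\tau/\beta$ for some $i\in\{1,\dots,r\}$, and every $t\in\mathbb{N}_{\ge0}$, $$\Pr\{\theta\in\Theta_t\}\ \le\ \Bigl\{1-\Bigl[p_w\Bigl(\frac{\epsilon\beta}{N_u\tau}\Bigr)\Bigr]^{N_u}\Bigr\}^{\lfloor t/N_u\rfloor}.$$
   Context: Setting: $\theta^\ast\in\mathbb{R}^p$ is a fixed (unknown) parameter vector. $\mathcal{W}=\{w\in\mathbb{R}^{n_x}:\Pi_w w\le\pi_w\}$ is a compact convex polytope with $\pi_w>0$. The disturbances $w_0,w_1,\dots$ are independent random vectors in $\mathbb{R}^{n_x}$. $D_0,D_1,\dots\in\mathbb{R}^{n_x\times p}$ is a given (non-random) sequence of regressor matrices. For $t\ge1$ the (random) unfalsified parameter set is $\Delta_t=\{\theta\in\mathbb{R}^p: D_{t-1}(\theta^\ast-\theta)+w_{t-1}\in\mathcal{W}\}$. $\|\cdot\|$ is the Euclidean norm (induced 2-norm for matrices); $\mathcal{B}=\{x\in\mathbb{R}^{n_x}:\|x\|\le1\}$; $\oplus$ is Minkowski sum; $[M]_i$ is the $i$th row of $M$. Persistent excitation assumption: there exist $\tau>0$, $\beta>0$ and an integer $N_u\ge\lceil p/n_x\rceil$ such that for every $t\ge0$, $\|D_t\|\le\tau$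 and $\sum_{j=t}^{t+N_u-1}D_j^\top D_j\succeq\beta I$. Inexact disturbance bound assumption: there exist a compact set $\Omega\subset\mathbb{R}^{n_x}$ and $\rho>0$ with $\Omega\subseteq\mathcal{W}\subseteq\Omega\oplus\rho\mathcal{B}$, such that $w_t\in\Omega$ for all $t$, and a function $p_w:(0,\infty)\to(0,1]$ such that for all $w^0\in\partial\Omega$ (boundary of $\Omega$), all $\epsilon>0$ and all $t\ge0$, $\Pr\{\|w_t-w^0\|<\epsilon\}\ge p_w(\epsilon)$. Fixed-complexity parameter set with periodic update: $M_\Theta\in\mathbb{R}^{r\times p}$ has rows of unit Euclidean norm and is such that $\Theta(\mu):=\{\theta:M_\Theta\theta\le\mu\}$ is bounded for every $\mu\in\mathbb{R}^r$; $\Theta_0=\Theta(\mu_0)$ contains $\theta^\ast$. For $t\ge1$: if $t=kN_u$ for some integer $k\ge1$, then $\Theta_t=\Theta(\mu_t)$ with $[\mu_t]_i=\max\{[M_\Theta]_i\theta:\theta\in\Theta_{t-N_u}\cap\bigcap_{j=t-N_u+1}^t\Delta_j\}$ for $i=1,\dots,r$; otherwise $\Theta_t=\Theta_{t-1}$. *)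

From HB Require Import structures.
From mathcomp Require Import all_boot all_order all_algebra.
From mathcomp Require Import all_classical all_reals all_analysis.
Set Implicit Arguments. Unset Strict Implicit. Unset Printing Implicit Defensive.
Import Order.TTheory GRing.Theory Num.Theory.
Import numFieldNormedType.Exports.
Local Open Scope classical_set_scope.
Local Open Scope ring_scope.

Definition enorm (R : realType) (n : nat) (x : 'cV[R]_n) : R :=
  Num.sqrt (\sum_(i < n) x i 0 ^+ 2).

(* Induced 2-norm bound: ||D|| <= tau  iff  ||D x|| <= tau ||x|| for all x. *)
Definition opnorm_le (R : realType) (m n : nat) (D : 'M[R]_(m, n)) (tau : R) :=
  forall x : 'cV[R]_n, enorm (D *m x) <= tau * enorm x.

Definition loewner_ge (R : realType) (n : nat) (A B : 'M[R]_n) :=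
  forall x : 'cV[R]_n, 0 <= (x^T *m (A - B) *m x) 0 0.

Definition cv_le (R : realType) (n : nat) (x y : 'cV[R]_n) :=
  forall i, x i 0 <= y i 0.

Definition borel_cv (R : realType) (n : nat) (B : set 'cV[R]_n) : Prop :=
  (<<s [set A : set 'cV[R]_n | open A] >>) B.

Definition random_vector d (T : measurableType d) (R : realType) (n : nat)
  (X : T -> 'cV[R]_n) : Prop :=
  forall B, borel_cv B -> measurable (X @^-1` B).

Definition mutually_independent d (T : measurableType d) (R : realType)
  (P : probability T R) (n : nat) (w : nat -> T -> 'cV[R]_n) : Prop :=
  forall (s : seq nat) (B : nat -> set 'cV[R]_n),
    uniq s -> (forall i, i \in s -> borel_cv (B i)) ->
    P (\big[setI/setT]_(i <- s) (w i @^-1` B i)) =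
    (\prod_(i <- s) P (w i @^-1` B i))%E.

Definition boundary (T : topologicalType) (A : set T) : set T :=
  closure A `\` A°.

Definition bounded_cv (R : realType) (n : nat) (A : set 'cV[R]_n) : Prop :=
  exists M : R, forall x, A x -> enorm x <= M.

Definition is_max (R : realType) (S : set R) (x : R) : Prop :=
  S x /\ (forall y, S y -> y <= x).

Definition Theta_of (R : realType) (r p : nat) (M : 'M[R]_(r, p)) (mu : 'cV[R]_r)
  : set 'cV[R]_p := [set th | cv_le (M *m th) mu].

(* Unfalsified set Delta_t, given D_{t-1} and w_{t-1}. *)
Definition Delta_set (R : realType) (nx p q : nat) (Pi : 'M[R]_(q, nx))
  (pi : 'cV[R]_q) (Dm : 'M[R]_(nx, p)) (thstar : 'cV[R]_p) (wm : 'cV[R]_nx)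
  : set 'cV[R]_p :=
  [set th | cv_le (Pi *m (Dm *m (thstar - th) + wm)) pi].

(* Outer probability: every event E is contained in a measurable set of
   probability at most b (equals P E <= b when E is measurable). *)
Definition outer_prob_le d (T : measurableType d) (R : realType)
  (P : probability T R) (E : set T) (b : R) : Prop :=
  exists2 A : set T, measurable A /\ E `<=` A & (P A <= b%:E)%E.

(* Fix the row [m] of [M_Theta] along which [th] is far from [thstar].  In
   period [k], let [v] solve [G v = m], where [G] is the Gram matrix of the
   period's regressors; persistent excitation makes [G] invertible with
   [|v| <= 1/beta].  If every disturbance [w j] of the period lies within
   [e = eps beta / (N_u tau)] of the point of [Omega] minimising
   [<D j v, .>] (a boundary point of [Omega]), then every parameter [th']
   unfalsified during the period satisfies [<m, th' - thstar> < eps +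
   rho N_u tau / beta], so the update at the end of the period removes [th]
   for good.  Distinct periods involve distinct disturbances, so these events
   are independent, each of probability at least [p_w(e) ^ N_u]. *)

From HB Require Import structures.
From mathcomp Require Import all_boot all_order all_algebra.
From mathcomp Require Import all_classical all_reals all_analysis.
From mathcomp Require Import ring lra.
Set Implicit Arguments. Unset Strict Implicit. Unset Printing Implicit Defensive.
Import Order.TTheory GRing.Theory Num.Theory.
Import numFieldNormedType.Exports.
Local Open Scope classical_set_scope.
Local Open Scope ring_scope.

Section EuclideanGeometry.
Variable R : realType.

Definition dot n (u v : 'cV[R]_n) : R := (u^T *m v) 0 0.

Lemma dotE n (u v : 'cV[R]_n) : dot u v = \sum_i u i 0 * v i 0.
Proof. by rewrite /dot mxE; apply: eq_bigr => i _; rewrite mxE. Qed.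

Lemma dotC n (u v : 'cV[R]_n) : dot u v = dot v u.
Proof. by rewrite !dotE; apply: eq_bigr => i _; rewrite mulrC. Qed.

Lemma dotDr n (u v v' : 'cV[R]_n) : dot u (v + v') = dot u v + dot u v'.
Proof. by rewrite !dotE -big_split; apply: eq_bigr => i _; rewrite mxE mulrDr. Qed.

Lemma dotBr n (u v v' : 'cV[R]_n) : dot u (v - v') = dot u v - dot u v'.
Proof. by rewrite !dotE -sumrB; apply: eq_bigr => i _; rewrite !mxE mulrBr. Qed.

Lemma dotZr n (u v : 'cV[R]_n) a : dot u (a *: v) = a * dot u v.
Proof. by rewrite !dotE mulr_sumr; apply: eq_bigr => i _; rewrite mxE mulrCA. Qed.

Lemma dot0l n (v : 'cV[R]_n) : dot 0 v = 0.
Proof. by rewrite /dot trmx0 mul0mx mxE. Qed.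

Lemma dot_sumr n (I : Type) (s : seq I) (P : pred I) (u : 'cV[R]_n)
    (F : I -> 'cV[R]_n) :
  dot u (\sum_(i <- s | P i) F i) = \sum_(i <- s | P i) dot u (F i).
Proof. by rewrite /dot mulmx_sumr summxE. Qed.

Lemma dot_mulmxr m n (A : 'M[R]_(m, n)) u v : dot u (A *m v) = dot (A^T *m u) v.
Proof. by rewrite /dot trmx_mul trmxK mulmxA. Qed.

Lemma dot_ge0 n (u : 'cV[R]_n) : 0 <= dot u u.
Proof. by rewrite dotE; apply: sumr_ge0 => i _; rewrite -expr2 sqr_ge0. Qed.

Lemma dot_le0 n (u : 'cV[R]_n) : dot u u <= 0 -> u = 0.
Proof.
move=> uu0; have /eqP : dot u u = 0 by apply/eqP; rewrite eq_le uu0 dot_ge0.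
rewrite dotE psumr_eq0 => [/allP u0|i _]; last by rewrite -expr2 sqr_ge0.
apply/matrixP => i j; rewrite ord1 mxE.
by have /implyP := u0 i (mem_index_enum i); rewrite mulf_eq0 orbb => /(_ isT)/eqP.
Qed.

Lemma mulmx_row_dot m n (A : 'M[R]_(m, n)) (x : 'cV[R]_n) i :
  (A *m x) i 0 = dot (row i A)^T x.
Proof. by rewrite dotE mxE; apply: eq_bigr => j _; rewrite !mxE. Qed.

Lemma enormE n (u : 'cV[R]_n) : enorm u = Num.sqrt (dot u u).
Proof. by rewrite /enorm dotE; congr Num.sqrt; apply: eq_bigr => i _; rewrite expr2. Qed.

Lemma enorm_ge0 n (u : 'cV[R]_n) : 0 <= enorm u.
Proof. exact: sqrtr_ge0. Qed.

Lemma enorm0 n : enorm (0 : 'cV[R]_n) = 0.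
Proof. by rewrite enormE dot0l sqrtr0. Qed.

Lemma enorm_sqr n (u : 'cV[R]_n) : enorm u ^+ 2 = dot u u.
Proof. by rewrite enormE sqr_sqrtr ?dot_ge0. Qed.

Lemma enormB n (u v : 'cV[R]_n) : enorm (u - v) = enorm (v - u).
Proof.
by rewrite !enormE !dotE; congr Num.sqrt; apply: eq_bigr => i _; rewrite !mxE; ring.
Qed.

Lemma dot_sqr_le n (u v : 'cV[R]_n) : dot u v ^+ 2 <= dot u u * dot v v.
Proof.
have [->|u0] := eqVneq u 0; first by rewrite !dot0l expr0n mul0r.
have uu0 : 0 < dot u u by rewrite ltNge; apply: contra u0 => /dot_le0->.
have quad t : 0 <= t ^+ 2 * dot u u - 2 * t * dot u v + dot v v.
  have -> : t ^+ 2 * dot u u - 2 * t * dot u v + dot v v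
      = \sum_i (t * u i 0 - v i 0) ^+ 2.
    rewrite !dotE !mulr_sumr -sumrN -!big_split /=.
    by apply: eq_bigr => i _; ring.
  by apply: sumr_ge0 => i _; rewrite sqr_ge0.
have := quad (dot u v / dot u u).
set a := dot u u; set c := dot u v; set b := dot v v.
have -> : (c / a) ^+ 2 * a - 2 * (c / a) * c + b = (a * b - c ^+ 2) / a.
  by field; rewrite gt_eqF.
by rewrite pmulr_lge0 ?invr_gt0 // subr_ge0.
Qed.

Lemma dot_le_enorm n (u v : 'cV[R]_n) : dot u v <= enorm u * enorm v.
Proof.
rewrite !enormE -sqrtrM ?dot_ge0 //; apply: le_trans (ler_norm _) _.
by rewrite -sqrtr_sqr ler_sqrt ?dot_sqr_le // mulr_ge0 ?dot_ge0.
Qed.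

Lemma loewner_ge_dot n (G : 'M[R]_n) b (x : 'cV[R]_n) :
  loewner_ge G b%:M -> b * dot x x <= dot x (G *m x).
Proof.
move=> /(_ x); rewrite -mulmxA -/(dot x _) mulmxBl mul_scalar_mx dotBr dotZr.
by rewrite subr_ge0.
Qed.

Lemma loewner_ge_unitmx n (G : 'M[R]_n) b : 0 < b -> loewner_ge G b%:M ->
  G \in unitmx.
Proof.
move=> b0 Gb; rewrite unitmxE unitfE; apply/negP => /det0P [v v0 vG].
have := loewner_ge_dot v^T Gb.
rewrite [X in _ <= X]/dot trmxK mulmxA vG mul0mx mxE pmulr_rle0 // => /dot_le0.
by move/eqP; rewrite trmx_eq0 (negPf v0).
Qed.

Lemma loewner_ge_enorm_le n (G : 'M[R]_n) b (v : 'cV[R]_n) :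
  loewner_ge G b%:M -> b * enorm v <= enorm (G *m v).
Proof.
move=> Gb; have [v0|vpos] := eqVneq (enorm v) 0.
  by rewrite v0 mulr0 enorm_ge0.
have : b * enorm v * enorm v <= enorm (G *m v) * enorm v.
  rewrite -mulrA -expr2 enorm_sqr (mulrC (enorm _)).
  exact: le_trans (loewner_ge_dot v Gb) (dot_le_enorm _ _).
by rewrite ler_pM2r // lt_neqAle eq_sym vpos enorm_ge0.
Qed.

Definition gram_solve nx p (D : nat -> 'M[R]_(nx, p)) (s : seq nat) (m : 'cV[R]_p) :=
  invmx (\sum_(j <- s) (D j)^T *m D j) *m m.

Lemma dot_gram m n (D : nat -> 'M[R]_(m, n)) (s : seq nat) (x y : 'cV[R]_n) :
  dot x ((\sum_(j <- s) (D j)^T *m D j) *m y)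
  = \sum_(j <- s) dot (D j *m x) (D j *m y).
Proof.
rewrite mulmx_suml dot_sumr; apply: eq_bigr => j _.
by rewrite -mulmxA dot_mulmxr trmxK.
Qed.

Lemma loewner_ge_gram_dim_gt0 nx p (D : nat -> 'M[R]_(nx, p)) s b (x : 'cV[R]_p) :
  0 < b -> x != 0 -> loewner_ge (\sum_(j <- s) (D j)^T *m D j) b%:M -> (0 < nx)%N.
Proof.
move=> b0 x0 Gb; rewrite lt0n; apply/negP => /eqP nx0.
have := loewner_ge_dot x Gb; rewrite dot_gram big1 => [|j _]; last first.
  by rewrite dotE; move: (D j *m x); rewrite nx0 => y; rewrite big_ord0.
by rewrite pmulr_rle0 // => /dot_le0 x_eq0; rewrite x_eq0 eqxx in x0.
Qed.

Lemma dot_sub_le_argmin n (a w w0 x o : 'cV[R]_n) : dot a w0 <= dot a o ->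
  dot a (w - x) <= enorm a * (enorm (w - w0) + enorm (x - o)).
Proof.
move=> w0_min.
have -> : w - x = (w - w0) + (w0 - o) + (o - x) by rewrite !addrA !subrK.
rewrite dotDr dotDr (dotBr a w0) mulrDr -(enormB o).
have := dot_le_enorm a (w - w0); have := dot_le_enorm a (o - x); lra.
Qed.

(* Since [G v = m], [dot m delta] splits into the terms [dot (D j v) (D j delta)],
   each bounded by [dot_sub_le_argmin]. *)
Lemma gram_dot_le nx p (D : nat -> 'M[R]_(nx, p)) (s : seq nat) (tau beta rho : R)
    (m v delta : 'cV[R]_p) (w w0 x o : nat -> 'cV[R]_nx) :
  0 <= tau -> 0 < beta -> (forall j, opnorm_le (D j) tau) ->
  loewner_ge (\sum_(j <- s) (D j)^T *m D j) beta%:M ->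
  (\sum_(j <- s) (D j)^T *m D j) *m v = m ->
  (forall j, j \in s -> [/\ D j *m delta = w j - x j, enorm (x j - o j) <= rho
                          & dot (D j *m v) (w0 j) <= dot (D j *m v) (o j)]) ->
  dot m delta <= tau * enorm m / beta * \sum_(j <- s) (enorm (w j - w0 j) + rho).
Proof.
move=> tau0 beta0 D_tau G_beta Gv residual.
have Dv_le j : enorm (D j *m v) <= tau * enorm m / beta.
  apply: le_trans (D_tau j v) _; rewrite -mulrA ler_wpM2l // ler_pdivlMr //.
  by rewrite mulrC -Gv; exact: loewner_ge_enorm_le.
rewrite -{1}Gv dotC dot_gram mulr_sumr big_seq [X in _ <= X]big_seq.
apply: ler_sum => j sj; have [-> xo w0_min] := residual j sj.
rewrite dotC; apply: le_trans (dot_sub_le_argmin _ _ w0_min) _.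
by apply: ler_pM; rewrite ?addr_ge0 ?enorm_ge0 ?lerD2l.
Qed.

End EuclideanGeometry.

Section EuclideanTopology.
Variable R : realType.

Lemma dot_continuous n (a : 'cV[R]_n) : continuous (dot a).
Proof.
have -> : dot a = fun x => \sum_i a i 0 * x i 0 by apply/funext => x; rewrite dotE.
apply: (@continuous_big _ _ _ _ _ add_continuous) => i _ x.
by apply: continuousM; [exact: cst_continuous | exact: coord_continuous].
Qed.

Lemma enorm_continuous n : continuous (@enorm R n).
Proof.
have -> : @enorm R n = fun x => Num.sqrt (\sum_i x i 0 * x i 0).
  by apply/funext => x; rewrite enormE dotE.
move=> x; apply: continuous_comp; last exact: sqrt_continuous.
apply: (@continuous_big _ _ _ _ _ add_continuous) => i _ y.
by apply: continuousM; exact: coord_continuous.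
Qed.

Lemma borel_cv_enorm_lt n (c : 'cV[R]_n) (e : R) :
  borel_cv [set x | enorm (x - c) < e].
Proof.
apply: sub_sigma_algebra.
have -> : [set x | enorm (x - c) < e] = (fun x => enorm (x - c)) @^-1` [set y | y < e].
  by [].
apply: open_comp; last exact: open_lt.
move=> x _; apply: continuous_comp; last exact: enorm_continuous.
by apply: continuousB; [exact: cvg_id | exact: cst_continuous].
Qed.

(* The linear functional [dot a'] with [a' != 0] has no local minimum on the
   interior of a set; [a' := 1] stands in for [a = 0]. *)
Lemma exists_boundary_argmin n (A : set 'cV[R]_n) : (0 < n)%N -> compact A ->
  A !=set0 -> forall a : 'cV[R]_n,
  exists w0, boundary A w0 /\ forall o, A o -> dot a w0 <= dot a o.
Proof.
move=> n0 cA A0 a.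
pose a' : 'cV[R]_n := if a == 0 then const_mx 1 else a.
have a'0 : a' != 0.
  rewrite /a'; case: (a =P 0) => [_|/eqP //].
  by apply/eqP => /matrixP /(_ (Ordinal n0) 0) /eqP; rewrite !mxE oner_eq0.
have [c cA' cmin] := compact_EVT_min A0 cA
  (continuous_subspaceT (@dot_continuous _ a')).
have {cA'} cA : A c by rewrite inE in cA'.
exists c; split; last first.
  move=> o oA; rewrite /a' in cmin; case: eqP cmin => [-> _|_ h].
    by rewrite !dot0l.
  by apply: h; rewrite inE.
split; first exact: subset_closure.
move=> /= cint.
have c_lim : (fun t : R => c - t *: a') @ (nbhs (0:R)) --> c.
  rewrite -[X in _ --> X]subr0; apply: cvgB; first exact: cvg_cst.
  by rewrite -(scale0r a'); apply: cvgZr_tmp; exact: cvg_id.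
have /nbhs_ballP [e e0 ball_e] := c_lim A cint.
have he : ball (0:R) e (e / 2).
  rewrite /ball /= sub0r normrN ger0_norm ?divr_ge0 ?ltW //.
  by rewrite ltr_pdivrMr // ltr_pMr // ltr1n.
have := cmin _ (mem_set (ball_e _ he)); rewrite /= dotBr dotZr.
have : 0 < dot a' a' by rewrite ltNge; apply: contra a'0 => /dot_le0->.
have : 0 < e / 2 by rewrite divr_gt0.
nra.
Qed.

End EuclideanTopology.

Section IndependentBlocks.
Context (R : realType) (d : measure_display) (T : measurableType d)
  (P : probability T R) (n : nat) (w : nat -> T -> 'cV[R]_n).
Hypothesis w_rv : forall t, random_vector (w t).
Hypothesis w_indep : mutually_independent P w.

Definition pr (A : set T) : R := fine (P A).

Lemma prE A : measurable A -> P A = (pr A)%:E.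
Proof. by move=> mA; rewrite /pr fineK // fin_num_measure. Qed.

Lemma pr_le1 A : measurable A -> pr A <= 1.
Proof. by move=> mA; have := probability_le1 P mA; rewrite prE // lee_fin. Qed.

Lemma pr_setD A B : measurable A -> measurable B ->
  pr (A `\` B) = pr A - pr (A `&` B).
Proof.
move=> mA mB; rewrite /pr measureD //; last first.
  by apply: le_lt_trans (probability_le1 P mA) _; rewrite ltry.
by rewrite fineB // fin_num_measure //; exact: measurableI.
Qed.

Definition cylinder (s : seq nat) (B : nat -> set 'cV[R]_n) : set T :=
  \big[setI/setT]_(i <- s) (w i @^-1` B i).

Lemma measurable_cylinder s B : (forall i, i \in s -> borel_cv (B i)) ->
  measurable (cylinder s B).
Proof.
elim: s => [|i s IHs] sB; first by rewrite /cylinder big_nil; exact: measurableT.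
rewrite /cylinder big_cons; apply: measurableI; first exact: w_rv (sB _ (mem_head _ _)).
by apply: IHs => j js; apply: sB; rewrite in_cons js orbT.
Qed.

Lemma pr_cylinder s B : uniq s -> (forall i, i \in s -> borel_cv (B i)) ->
  pr (cylinder s B) = \prod_(i <- s) pr (w i @^-1` B i).
Proof.
move=> us sB; rewrite {1}/pr /cylinder (w_indep us sB).
rewrite (eq_big_seq (fun i => (pr (w i @^-1` B i))%:E)) ?prodEFin // => i si.
by rewrite prE //; exact: w_rv (sB _ si).
Qed.

Variables (N : nat) (B : nat -> set 'cV[R]_n).
Hypothesis B_borel : forall j, borel_cv (B j).

Definition period_event (k : nat) : set T := cylinder (iota (k * N) N) B.

Definition no_period_event (K : nat) : set T :=
  \big[setI/setT]_(0 <= k < K) ~` period_event k.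

Lemma measurable_period_event k : measurable (period_event k).
Proof. by apply: measurable_cylinder => i _; exact: B_borel. Qed.

Lemma measurable_no_period_event K : measurable (no_period_event K).
Proof.
elim: K => [|K IHK]; first by rewrite /no_period_event big_geq //; exact: measurableT.
rewrite /no_period_event big_nat_recr //=; apply: measurableI => //.
exact/measurableC/measurable_period_event.
Qed.

(* Induction on [K], carrying along a cylinder on indices beyond the first [K]
   periods: [A & no_period K.+1] is [A & no_period K] minus the cylinder
   [A & period K], to which the induction hypothesis applies again. *)
Lemma pr_cylinder_no_period_event K s C : uniq s ->
  (forall i, i \in s -> borel_cv (C i)) -> (forall i, i \in s -> (K * N <= i)%N) ->
  pr (cylinder s C `&` no_period_event K)
  = pr (cylinder s C) * \prod_(0 <= k < K) (1 - pr (period_event k)).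
Proof.
elim: K s C => [|K IHK] s C us sC s_ge.
  by rewrite /no_period_event !big_geq // setIT mulr1.
rewrite /no_period_event big_nat_recr //= -/(no_period_event K) setIA -setDE.
rewrite pr_setD; last exact: measurable_period_event.
  2: exact: measurableI (measurable_cylinder sC) (measurable_no_period_event K).
pose C' i := if i \in s then C i else B i.
have C'_borel i : borel_cv (C' i) by rewrite /C'; case: ifP => [/sC|_].
have period_notin i : i \in iota (K * N) N -> i \notin s.
  rewrite mem_iota => /andP [_ iN]; apply/negP => /s_ge.
  by rewrite mulSn addnC leqNgt iN.
have us' : uniq (s ++ iota (K * N) N).
  by rewrite cat_uniq us iota_uniq andbT; apply/hasPn.
have C's : cylinder s C' = cylinder s C.
  by apply: eq_big_seq => i si; rewrite /C' si.
have C'period : cylinder (iota (K * N) N) C' = period_event K.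
  by apply: eq_big_seq => i /period_notin/negbTE iN; rewrite /C' iN.
have -> : cylinder s C `&` no_period_event K `&` period_event K
          = cylinder (s ++ iota (K * N) N) C' `&` no_period_event K.
  by rewrite /cylinder big_cat -!/(cylinder _ _) C's C'period setIAC.
have s_ge' i : i \in s -> (K * N <= i)%N.
  by move/s_ge; apply: leq_trans; rewrite leq_mul2r leqnSn orbT.
have s'_ge i : i \in s ++ iota (K * N) N -> (K * N <= i)%N.
  by rewrite mem_cat mem_iota => /orP [/s_ge'|/andP []].
rewrite (IHK _ _ us sC s_ge') (IHK _ _ us' (fun i _ => C'_borel i) s'_ge).
rewrite big_nat_recr //= (pr_cylinder us' (fun i _ => C'_borel i)) big_cat /=.
rewrite -(pr_cylinder us (fun i _ => C'_borel i)) C's.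
rewrite -(pr_cylinder (iota_uniq _ _) (fun i _ => C'_borel i)) C'period.
ring.
Qed.

Lemma pr_no_period_event K :
  pr (no_period_event K) = \prod_(0 <= k < K) (1 - pr (period_event k)).
Proof.
have := @pr_cylinder_no_period_event K [::] B isT (fun _ _ => B_borel _)
  (fun i (i0 : i \in [::]) => ltac:(by [])).
by rewrite /cylinder big_nil setTI /pr probability_setT mul1r.
Qed.

Lemma pr_no_period_event_le K c : 0 <= c ->
  (forall j, c <= pr (w j @^-1` B j)) -> pr (no_period_event K) <= (1 - c ^+ N) ^+ K.
Proof.
move=> c0 c_le; rewrite pr_no_period_event.
rewrite -[in X in _ <= X](subn0 K) -prodr_const_nat.
apply: ler_prod => k _; rewrite subr_ge0 (pr_le1 (measurable_period_event k)) /=.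
rewrite lerD2l lerN2 /period_event (pr_cylinder (iota_uniq _ _) (fun j _ => B_borel j)).
have -> : c ^+ N = \prod_(j <- iota (k * N) N) c.
  by rewrite big_const_seq count_predT size_iota iter_mulr_1.
by apply: ler_prod => j _; rewrite c0 c_le.
Qed.

End IndependentBlocks.

Lemma unfalsified_dot_lt (R : realType) nx p q (Pi_w : 'M[R]_(q, nx))
    (pi_w : 'cV[R]_q) (Omega : set 'cV[R]_nx) (rho tau beta e : R)
    (D : nat -> 'M[R]_(nx, p)) (thstar m : 'cV[R]_p) (w w0 : nat -> 'cV[R]_nx)
    (s : seq nat) :
  let G := \sum_(j <- s) (D j)^T *m D j in
  0 < tau -> 0 < beta -> 0 < enorm m -> s != [::] ->
  (forall j, opnorm_le (D j) tau) -> loewner_ge G beta%:M ->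
  [set x | cv_le (Pi_w *m x) pi_w] `<=` [set x | exists2 o, Omega o & enorm (x - o) <= rho] ->
  (forall j, j \in s -> forall o, Omega o ->
     dot (D j *m gram_solve D s m) (w0 j) <= dot (D j *m gram_solve D s m) o) ->
  (forall j, j \in s -> enorm (w j - w0 j) < e) ->
  forall th, (forall j, j \in s -> Delta_set Pi_w pi_w (D j) thstar (w j) th) ->
  dot m (th - thstar) < tau * enorm m / beta * ((size s)%:R * (e + rho)).
Proof.
move=> G tau0 beta0 m0 s0 D_tau G_beta W_Om w0_min w_near th th_unfals.
pose x j := D j *m (thstar - th) + w j.
have x_near j : exists o, j \in s -> Omega o /\ enorm (x j - o) <= rho.
  have [sj|_] := boolP (j \in s); last by exists 0.
  by have [y Oy xy] := W_Om _ (th_unfals j sj); exists y.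
have [y xy] := choice x_near.
have residual j : j \in s -> [/\ D j *m (th - thstar) = w j - x j,
    enorm (x j - y j) <= rho & dot (D j *m gram_solve D s m) (w0 j)
                               <= dot (D j *m gram_solve D s m) (y j)].
  move=> sj; have [Oy xyj] := xy j sj; split => //; last exact: w0_min.
  by rewrite /x opprD addrCA subrr addr0 -mulmxN opprB.
have Gv : G *m gram_solve D s m = m.
  by rewrite /gram_solve mulKVmx // (loewner_ge_unitmx beta0).
apply: le_lt_trans (gram_dot_le (ltW tau0) beta0 D_tau G_beta Gv residual) _.
rewrite ltr_pM2l ?divr_gt0 ?mulr_gt0 // mulr_natl -iter_addr_0 -(count_predT s).
rewrite -big_const_seq big_seq [X in _ < X]big_seq.
apply: ltr_sum => [|j sj]; last by rewrite ltrD2r w_near.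
by apply/hasP; exists (head 0%N s); rewrite // -nth0 mem_nth // lt0n size_eq0.
Qed.

Definition period_gram_solve (R : realType) nx p (D : nat -> 'M[R]_(nx, p))
    (N j : nat) (m : 'cV[R]_p) : 'cV[R]_p :=
  gram_solve D (index_iota (j %/ N * N) (j %/ N * N + N)) m.

Section PeriodicUpdate.
Variables (R : realType) (nx p q r : nat) (Pi_w : 'M[R]_(q, nx)) (pi_w : 'cV[R]_q)
  (D : nat -> 'M[R]_(nx, p)) (thstar : 'cV[R]_p) (w : nat -> 'cV[R]_nx)
  (M : 'M[R]_(r, p)) (N : nat) (mu : nat -> 'cV[R]_r).
Hypothesis N_gt0 : (0 < N)%N.
Hypothesis mu_hold : forall t, (0 < t)%N -> ~~ (N %| t)%N -> mu t = mu t.-1.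
Hypothesis mu_update : forall t, (0 < t)%N -> (N %| t)%N -> forall i : 'I_r,
  is_max [set (M *m th) i 0 | th in Theta_of M (mu (t - N)%N) `&`
            [set th | forall j, (t - N < j <= t)%N ->
               Delta_set Pi_w pi_w (D j.-1) thstar (w j.-1) th]]
         (mu t i 0).

Lemma mu_floor t : mu t = mu (t %/ N * N).
Proof.
elim: t => [|t IHt]; first by rewrite div0n mul0n.
have [Nt|Nt] := boolP (N %| t.+1)%N; first by rewrite divnK.
by rewrite mu_hold //= IHt (divnS _ N_gt0) (negbTE Nt) add0n.
Qed.

Lemma mu_update_witness k i : exists2 th,
  Theta_of M (mu (k * N)) th /\
  (forall j, j \in index_iota (k * N) (k * N + N) ->
     Delta_set Pi_w pi_w (D j) thstar (w j) th)
  & (M *m th) i 0 = mu (k.+1 * N) i 0.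
Proof.
have kN_gt0 : (0 < k.+1 * N)%N by rewrite muln_gt0.
have [[th [th_in th_unfals] <-] _] := mu_update kN_gt0 (dvdn_mull _ (dvdnn N)) i.
rewrite mulSnr addnK in th_in th_unfals.
by exists th => //; split => // j; rewrite mem_index_iota => jk; exact: (th_unfals j.+1).
Qed.

Lemma mu_period_succ_le k : cv_le (mu (k.+1 * N)) (mu (k * N)).
Proof. by move=> i; have [th [th_in _] <-] := mu_update_witness k i; exact: th_in. Qed.

Lemma mu_le_period t k : (k <= t %/ N)%N -> cv_le (mu t) (mu (k * N)).
Proof.
rewrite mu_floor => /subnKC <-; elim: (_ - k)%N => [|l IHl] i; first by rewrite addn0.
by rewrite addnS; apply: le_trans (IHl i); exact: mu_period_succ_le.
Qed.

Variables (Omega : set 'cV[R]_nx) (rho tau beta : R).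
Hypotheses (tau_gt0 : 0 < tau) (beta_gt0 : 0 < beta).
Hypothesis D_tau : forall j, opnorm_le (D j) tau.
Hypothesis D_pe : forall t, loewner_ge (\sum_(t <= j < t + N) (D j)^T *m D j) beta%:M.
Hypothesis W_Om : [set x | cv_le (Pi_w *m x) pi_w] `<=`
  [set x | exists2 o, Omega o & enorm (x - o) <= rho].

(* The parameter realising the update at the end of period [k] obeys the bound
   of [unfalsified_dot_lt], which [th] violates; [mu] only shrinks afterwards. *)
Lemma period_excludes (i : 'I_r) (wmin : 'cV[R]_nx -> 'cV[R]_nx) (e : R)
    (th : 'cV[R]_p) t k :
  enorm (row i M)^T = 1 ->
  (forall a o, Omega o -> dot a (wmin a) <= dot a o) ->
  N%:R * tau / beta * (e + rho) <= (M *m (th - thstar)) i 0 ->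
  Theta_of M (mu t) th -> (k < t %/ N)%N ->
  ~ (forall j, (k * N <= j < k * N + N)%N ->
       enorm (w j - wmin (D j *m period_gram_solve D N j (row i M)^T)) < e).
Proof.
move=> m1 wmin_min far th_in kt near.
set m := (row i M)^T; set s := index_iota (k * N) (k * N + N).
have [th' [_ th'_unfals] th'_row] := mu_update_witness k i.
have s_period j : j \in s -> period_gram_solve D N j m = gram_solve D s m.
  rewrite mem_index_iota => /andP [kj jk]; rewrite /period_gram_solve.
  by rewrite -(subnKC kj) divnMDl // divn_small ?addn0 // ltn_subLR.
have near_s j : j \in s -> enorm (w j - wmin (D j *m gram_solve D s m)) < e.
  by move=> sj; rewrite -(s_period j sj); apply: near; rewrite -mem_index_iota.
have m_gt0 : 0 < enorm m by rewrite m1 ltr01.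
have s_nil : s != [::] by rewrite -size_eq0 size_iota addKn -lt0n.
have := unfalsified_dot_lt (w0 := fun j => wmin (D j *m gram_solve D s m))
  tau_gt0 beta_gt0 m_gt0 s_nil D_tau (D_pe _) W_Om (fun j _ => wmin_min _)
  near_s th'_unfals.
have := mu_le_period kt i; have := th_in i; rewrite -th'_row size_iota addKn m1.
move: far; rewrite !mulmx_row_dot -/m !dotBr; lra.
Qed.

End PeriodicUpdate.

Unset Implicit Arguments.

Theorem theorem5
  (R : realType) (d : measure_display) (T : measurableType d)
  (P : probability T R)
  (nx p q r : nat)
  (thstar : 'cV[R]_p)
  (Pi_w : 'M[R]_(q, nx)) (pi_w : 'cV[R]_q)
  (w : nat -> T -> 'cV[R]_nx)
  (D : nat -> 'M[R]_(nx, p))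
  (tau beta : R) (N_u : nat)
  (Omega : set 'cV[R]_nx) (rho : R) (p_w : R -> R)
  (M_Theta : 'M[R]_(r, p)) (mu0 : 'cV[R]_r)
  (mu : nat -> T -> 'cV[R]_r) :
  (forall k, 0 < pi_w k 0) ->
  compact [set x : 'cV[R]_nx | cv_le (Pi_w *m x) pi_w] ->
  (forall t, random_vector (w t)) ->
  mutually_independent P w ->
  0 < tau -> 0 < beta ->
  (Num.ceil (p%:R / nx%:R : R) <= N_u%:Z)%R ->
  (forall t, opnorm_le (D t) tau) ->
  (forall t, loewner_ge (\sum_(t <= j < t + N_u) (D j)^T *m D j) (beta%:M)) ->
  compact Omega -> 0 < rho ->
  Omega `<=` [set x : 'cV[R]_nx | cv_le (Pi_w *m x) pi_w] ->
  [set x : 'cV[R]_nx | cv_le (Pi_w *m x) pi_w] `<=`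
    [set x | exists2 o, Omega o & enorm (x - o) <= rho] ->
  (forall t s, Omega (w t s)) ->
  (forall e : R, 0 < e -> 0 < p_w e <= 1) ->
  (forall w0, boundary Omega w0 -> forall e : R, 0 < e -> forall t,
     ((p_w e)%:E <= P [set s | (enorm (w t s - w0) < e)%R])%E) ->
  (forall i, enorm (row i M_Theta)^T = 1) ->
  (forall m : 'cV[R]_r, bounded_cv (Theta_of M_Theta m)) ->
  Theta_of M_Theta mu0 thstar ->
  (forall s, mu 0%N s = mu0) ->
  (forall t s, (0 < t)%N -> ~~ (N_u %| t)%N -> mu t s = mu t.-1 s) ->
  (forall t s, (0 < t)%N -> (N_u %| t)%N -> forall i : 'I_r,
     is_max [set (M_Theta *m th) i 0 | th in
               Theta_of M_Theta (mu (t - N_u)%N s) `&`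
               [set th | forall j, (t - N_u < j <= t)%N ->
                  Delta_set Pi_w pi_w (D j.-1) thstar (w j.-1 s) th]]
            (mu t s i 0)) ->
  forall (eps : R) (th : 'cV[R]_p), 0 < eps ->
    Theta_of M_Theta mu0 th ->
    (exists i : 'I_r,
       eps + rho * N_u%:R * tau / beta <= (M_Theta *m (th - thstar)) i 0) ->
    forall t : nat,
      outer_prob_le P [set s | Theta_of M_Theta (mu t s) th]
        ((1 - p_w (eps * beta / (N_u%:R * tau)) ^+ N_u) ^+ (t %/ N_u)%N).
Proof.
move=> pi_w_gt0 _ w_rv w_indep tau_gt0 beta_gt0 _ D_tau D_pe Om_compact _ _ W_Om _
  p_w_range p_w_bd M_unit _ _ _ mu_hold mu_update eps th eps_gt0 _ [i far] t.
have [N0|N_gt0] := posnP N_u.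
  exists setT; last by rewrite N0 divn0 expr0 probability_setT.
  by split => //; exact: measurableT.
set m := (row i M_Theta)^T.
have m_neq0 : m != 0.
  by apply/eqP => m0; have := M_unit i; rewrite -/m m0 enorm0 => /esym/eqP; rewrite oner_eq0.
have nx_gt0 := loewner_ge_gram_dim_gt0 beta_gt0 m_neq0 (D_pe 0%N).
have [y Om_y _] : exists2 y, Omega y & enorm (0 - y) <= rho.
  by apply: W_Om => k; rewrite mulmx0 mxE ltW.
have [wmin wmin_spec] := choice (exists_boundary_argmin nx_gt0 Om_compact (ex_intro _ y Om_y)).
pose e := eps * beta / (N_u%:R * tau).
have e_gt0 : 0 < e by rewrite divr_gt0 ?mulr_gt0 ?ltr0n.
pose near_wmin j := [set x | enorm (x - wmin (D j *m period_gram_solve D N_u j m)) < e].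
have near_borel j : borel_cv (near_wmin j) by exact: borel_cv_enorm_lt.
exists (no_period_event w N_u near_wmin (t %/ N_u)).
  split; first exact: measurable_no_period_event.
  move=> s th_in; rewrite /no_period_event -bigcap_seq => k /=.
  rewrite mem_index_iota /period_event /cylinder -bigcap_seq => /andP [_ kt] near_s.
  apply: (period_excludes (mu := fun t => mu t s) (w := fun t => w t s) N_gt0
    (fun t => mu_hold t s) (fun t => mu_update t s) tau_gt0 beta_gt0 D_tau D_pe W_Om
    (M_unit i) (fun a => (wmin_spec a).2) _ th_in kt) => [|j jk]; last first.
    by apply: near_s; rewrite /= mem_iota.
  suff -> : N_u%:R * tau / beta * (e + rho) = eps + rho * N_u%:R * tau / beta by [].
  by rewrite /e; field; rewrite ?mulf_neq0 ?gt_eqF ?ltr0n.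
rewrite (prE P (measurable_no_period_event w_rv _ near_borel _)) lee_fin.
apply: (pr_no_period_event_le w_rv w_indep _ near_borel) => [|j].
  by have /andP [/ltW] := p_w_range e e_gt0.
rewrite -lee_fin -prE; last exact: w_rv (near_borel j).
exact: p_w_bd _ (wmin_spec _).1 _ e_gt0 j.
Qed.
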